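(* Let $s\le L$ be positive integers, $\mathbf{D}\in\mathbb{R}^{N\times N}$, $\mathbf{H}\in\mathbb{R}^{N\times L}$, and consider the system $\mathbf{x}_k=\mathbf{D}\mathbf{x}_{k-1}+\mathbf{H}\mathbf{h}_k$ with inputs satisfying $\|\mathbf{h}_k\|_0\le s$. Suppose the system is $s$-sparse-controllable. Let $K^*$ be the minimum number of $s$-sparse input vectors required to steer the system from any given state to any other state, i.e. the smallest $K$ such that for all $\mathbf{x}_0,\mathbf{x}_{\mathrm{final}}\in\mathbb{R}^N$ there exist $\mathbf{h}_1,\dots,\mathbf{h}_K$ with $\|\mathbf{h}_k\|_0\le s$ and $\mathbf{x}_K=\mathbf{x}_{\mathrm{final}}$. Then $$\frac{N}{R^*_{\mathbf{H},s}}\le K^*\le\min\left\{q\left\lceil\frac{S^*}{s}\right\rceil,\ N-R^*_{\mathbf{H},s}+1\right\}\le N,$$ where $q$ is the degree of the minimal polynomial of $\mathbf{D}$, $R^*_{\mathbf{H},s}=\min\{\operatorname{rank}(\mathbf{H}),s\}$, and $$S^*=\min\Big\{|\mathcal{S}|:\ \mathcal{S}\subseteq\{1,\dots,L\},\ \operatorname{rank}\begin{bmatrix}\mathbf{D}-\lambda\mathbf{I} & \mathbf{H}_{\mathcal{S}}\end{bmatrix}=N\ \text{for all }\lambda\in\mathbb{C}\Big\}.$$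
   Context: $\|\cdot\|_0$ denotes the number of nonzero entries; $\mathbf{H}_{\mathcal{S}}$ is the submatrix of $\mathbf{H}$ formed by the columns indexed by $\mathcal{S}$. The system is $s$-sparse-controllable if for every initial state $\mathbf{x}_0\in\mathbb{R}^N$ and every final state $\mathbf{x}_{\mathrm{final}}\in\mathbb{R}^N$ there exist a finite $K$ and inputs $\mathbf{h}_1,\dots,\mathbf{h}_K$ with $\|\mathbf{h}_k\|_0\le s$ steering the system from $\mathbf{x}_0$ to $\mathbf{x}_K=\mathbf{x}_{\mathrm{final}}$. *)

From HB Require Import structures.
From mathcomp Require Import all_boot all_order all_algebra.
From mathcomp Require Import reals.
From mathcomp Require Import complex.
Set Implicit Arguments. Unset Strict Implicit. Unset Printing Implicit Defensive.
Import Order.TTheory GRing.Theory Num.Theory.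
Local Open Scope ring_scope.

Definition l0norm (R : realType) (L : nat) (h : 'cV[R]_L) : nat :=
  #|[set i : 'I_L | h i 0 != 0]|.

(* state of x_k = D x_{k-1} + H h_k; hs k stands for h_{k+1} *)
Fixpoint state (R : realType) (N L : nat) (D : 'M[R]_N) (H : 'M[R]_(N, L))
  (x0 : 'cV[R]_N) (hs : nat -> 'cV[R]_L) (k : nat) : 'cV[R]_N :=
  match k with
  | 0 => x0
  | k'.+1 => D *m state D H x0 hs k' + H *m hs k'
  end.

Definition steerable_in (R : realType) (N L : nat) (D : 'M[R]_N)
  (H : 'M[R]_(N, L)) (s K : nat) : Prop :=
  forall x0 xf : 'cV[R]_N, exists hs : nat -> 'cV[R]_L,
    (forall k, (k < K)%N -> (l0norm (hs k) <= s)%N) /\ state D H x0 hs K = xf.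

Definition sparse_controllable (R : realType) (N L : nat) (D : 'M[R]_N)
  (H : 'M[R]_(N, L)) (s : nat) : Prop :=
  forall x0 xf : 'cV[R]_N, exists (K : nat) (hs : nat -> 'cV[R]_L),
    (forall k, (k < K)%N -> (l0norm (hs k) <= s)%N) /\ state D H x0 hs K = xf.

Definition colsub_set (R : realType) (N L : nat) (H : 'M[R]_(N, L))
  (S : {set 'I_L}) : 'M[R]_(N, #|S|) :=
  colsub (fun j : 'I_#|S| => enum_val j) H.

Definition PBH_full (R : realType) (N L : nat) (D : 'M[R]_N)
  (H : 'M[R]_(N, L)) (S : {set 'I_L}) : Prop :=
  forall lambda : R[i],
    \rank (row_mx (map_mx (real_complex R) D - lambda%:M)
                  (map_mx (real_complex R) (colsub_set H S))) = N.

(* Transposing the dynamics, x_K^T = x_0^T A^K + sum_i h_i^T G A^(K-1-i) with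
   A := D^T and G := H^T, so the states reachable from 0 in K steps with input
   supports T_1, ..., T_K form the row space sum_e span(rows of G in T_e) A^e.

   Lower bound: steering in K steps means that these subspaces, one for each of
   the finitely many choices of supports of size at most s, cover the whole
   space; over an infinite field one of them is everything, while each has
   dimension at most K R*.

   First upper bound: the same covering argument applied to the last step gives
   s rows of G whose span, together with the rows of A, is everything; enlarge
   them to s rows T_0 of rank at least R*. Feed T_0 until its Krylov space is
   A-stable, then one new row of G at a time (a stable proper subspace misses a
   row of G by controllability), each time until stabilisation. Every step but
   the first gains a dimension, so N - R* + 1 steps suffice.

   Second upper bound: split a PBH set S into ceil(|S|/s) blocks of at most s
   rows and feed each block during q consecutive steps. By the minimal
   polynomial, q steps of a block reach its whole A-cyclic subspace, and PBH
   makes the sum of these cyclic subspaces everything. The block fed last is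
   chosen to span everything together with the rows of A; modulo its stable
   cyclic subspace, multiplication by A is then onto, so the earlier blocks,
   shifted by powers of A, still fill the rest. *)
From HB Require Import structures.
From mathcomp Require Import all_boot all_order all_algebra.
From mathcomp Require Import reals.
From mathcomp Require Import complex.
From mathcomp Require Import zify.
From Stdlib Require Import Classical.
Set Implicit Arguments. Unset Strict Implicit. Unset Printing Implicit Defensive.
Import Order.TTheory GRing.Theory Num.Theory.
Local Open Scope ring_scope.

Section SpanRows.
Variables (F : fieldType) (L N : nat) (G : 'M[F]_(L, N)).

Definition span_rows (T : {set 'I_L}) : 'M[F]_N := (\sum_(j in T) <<row j G>>)%MS.

Lemma span_rows_subP (T : {set 'I_L}) m (X : 'M[F]_(m, N)) :
  reflect (forall j, j \in T -> (row j G <= X)%MS) (span_rows T <= X)%MS.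
Proof.
apply: (iffP sumsmx_subP) => sTX j /sTX; first by rewrite genmxE.
by rewrite genmxE.
Qed.

Lemma row_sub_span_rows (T : {set 'I_L}) j : j \in T -> (row j G <= span_rows T)%MS.
Proof. by move=> jT; apply: (sumsmx_sup j) => //; rewrite genmxE. Qed.

Lemma span_rows_sub (T : {set 'I_L}) : (span_rows T <= G)%MS.
Proof. by apply/span_rows_subP => j _; apply: row_sub. Qed.

Lemma span_rowsS (T1 T2 : {set 'I_L}) :
  T1 \subset T2 -> (span_rows T1 <= span_rows T2)%MS.
Proof. by move=> /subsetP sT12; apply/span_rows_subP => j /sT12/row_sub_span_rows. Qed.

Lemma mulmx_sub_span_rows (T : {set 'I_L}) (u : 'rV[F]_L) :
  (forall j, j \notin T -> u 0 j = 0) -> (u *m G <= span_rows T)%MS.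
Proof.
move=> uT; rewrite mulmx_sum_row; apply: summx_sub => j _.
have [jT | /uT->] := boolP (j \in T); last by rewrite scale0r sub0mx.
by apply: scalemx_sub; apply: row_sub_span_rows.
Qed.

Lemma sub_span_rowsP (T : {set 'I_L}) (y : 'rV[F]_N) : (y <= span_rows T)%MS ->
  exists2 u : 'rV[F]_L, (forall j, j \notin T -> u 0 j = 0) & y = u *m G.
Proof.
move=> /sub_sumsmxP[v ->].
pose c j := (v j *m <<row j G>>%MS *m pinvmx (row j G)) 0 0.
exists (\row_j (if j \in T then c j else 0)) => [j /negbTE jT|].
  by rewrite mxE jT.
rewrite mulmx_sum_row [RHS](bigID (mem T)) /= [X in _ = _ + X]big1 ?addr0; last first.
  by move=> j /negbTE jT; rewrite mxE jT scale0r.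
apply: eq_bigr => j jT; rewrite mxE jT.
have vG : (v j *m <<row j G>>%MS <= row j G)%MS by rewrite mulmx_sub // genmxE.
by rewrite -{1}(mulmxKpV vG) [_ *m pinvmx _]mx11_scalar mul_scalar_mx.
Qed.

Lemma span_rows_rowsub (T : {set 'I_L}) :
  (span_rows T :=: rowsub (fun k : 'I_#|T| => enum_val k) G)%MS.
Proof.
apply/eqmxP/andP; split.
  apply/span_rows_subP => j jT.
  by rewrite -(enum_rankK_in jT jT) -row_rowsub row_sub.
by apply/row_subP => k; rewrite row_rowsub row_sub_span_rows // enum_valP.
Qed.

Lemma mxrank_span_rows_card (T : {set 'I_L}) : (\rank (span_rows T) <= #|T|)%N.
Proof. by rewrite span_rows_rowsub rank_leq_row. Qed.

Lemma mxrank_span_rows (T : {set 'I_L}) : (\rank (span_rows T) <= \rank G)%N.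
Proof. exact/mxrankS/span_rows_sub. Qed.

End SpanRows.

Lemma row_fullS (F : fieldType) m1 m2 n (A : 'M[F]_(m1, n)) (B : 'M[F]_(m2, n)) :
  (A <= B)%MS -> row_full A -> row_full B.
Proof. by move=> sAB; rewrite -!sub1mx => /submx_trans; apply. Qed.

Lemma stablemx_exp (F : fieldType) n (X A : 'M[F]_n) p :
  stablemx X A -> stablemx X (A ^+ p).
Proof.
move=> sXA; elim: p => [|p IHp]; first by rewrite expr0 mulmx1.
by rewrite exprSr; apply: stablemxM.
Qed.

Section Reachable.
Variables (F : fieldType) (L N : nat) (A : 'M[F]_N) (G : 'M[F]_(L, N)).

(* [sg e] is the support of the input applied [e] steps before the final time. *)
Definition reach (sg : nat -> {set 'I_L}) K : 'M[F]_N :=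
  (\sum_(e < K) (span_rows G (sg e) *m A ^+ e))%MS.

Lemma reach_term sg K e :
  (e < K)%N -> (span_rows G (sg e) *m A ^+ e <= reach sg K)%MS.
Proof. by move=> eK; apply: (sumsmx_sup (Ordinal eK)). Qed.

Lemma span_rows_sub_reach sg K : (0 < K)%N -> (span_rows G (sg 0%N) <= reach sg K)%MS.
Proof. by move=> K0; have := reach_term sg K0; rewrite expr0 mulmx1. Qed.

Lemma row_full_adds_exp (U : 'M[F]_N) p :
  stablemx U A -> row_full (U + A)%MS -> row_full (U + A ^+ p)%MS.
Proof.
move=> sUA fUA; elim: p => [|p IHp]; first by rewrite expr0 -sub1mx addsmxSr.
apply: row_fullS fUA; rewrite addsmx_sub addsmxSl /=.
have := submxMr A (submx_full 1%:M IHp); rewrite mul1mx => /submx_trans; apply.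
rewrite addsmxMr -[A ^+ p *m A]/(A ^+ p * A) -exprSr addsmx_sub addsmxSr andbT.
exact: submx_trans sUA (addsmxSl _ _).
Qed.

Lemma row_full_adds_mulmx_exp (U W : 'M[F]_N) p :
  stablemx U A -> row_full (U + A)%MS -> row_full (U + W)%MS ->
  row_full (U + W *m A ^+ p)%MS.
Proof.
move=> sUA fUA fUW; apply: row_fullS (row_full_adds_exp p sUA fUA).
rewrite addsmx_sub addsmxSl /=.
have := submxMr (A ^+ p) (submx_full 1%:M fUW); rewrite mul1mx => /submx_trans; apply.
rewrite addsmxMr addsmx_sub addsmxSr andbT.
exact: submx_trans (stablemx_exp p sUA) (addsmxSl _ _).
Qed.

Definition sched_cat (sg1 : nat -> {set 'I_L}) K1 (sg2 : nat -> {set 'I_L}) e :=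
  if (e < K1)%N then sg1 e else sg2 (e - K1)%N.

Lemma reach_cat sg1 K1 sg2 K2 :
  (reach sg1 K1 + reach sg2 K2 *m A ^+ K1 <= reach (sched_cat sg1 K1 sg2) (K1 + K2))%MS.
Proof.
rewrite addsmx_sub /reach sumsmxMr; apply/andP; split; apply/sumsmx_subP => e _.
  have := @reach_term (sched_cat sg1 K1 sg2) (K1 + K2) e (ltn_addr _ (ltn_ord e)).
  by rewrite /sched_cat ltn_ord.
have eK : (e + K1 < K1 + K2)%N by rewrite addnC ltn_add2l.
have := reach_term (sched_cat sg1 K1 sg2) eK.
by rewrite /sched_cat ltnNge leq_addl /= addnK exprD mulmxA.
Qed.

Definition krylov (U : 'M[F]_N) (T : {set 'I_L}) e : 'M[F]_N :=
  (U + reach (fun=> T) e)%MS.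

Lemma krylovS U T e : (krylov U T e <= krylov U T e.+1)%MS.
Proof.
apply: addsmxS => //; apply/sumsmx_subP => i _.
exact: (reach_term (fun=> T) (ltn_trans (ltn_ord i) (ltnSn e))).
Qed.

Lemma krylov_mulmx U T e :
  stablemx U A -> (krylov U T e *m A <= krylov U T e.+1)%MS.
Proof.
move=> sUA; rewrite addsmxMr addsmx_sub; apply/andP; split.
  exact: submx_trans sUA (addsmxSl _ _).
rewrite sumsmxMr; apply/sumsmx_subP => i _; apply: submx_trans (addsmxSr _ _).
have iK : (i.+1 < e.+1)%N by rewrite ltnS.
by have /= := reach_term (fun=> T) iK; rewrite exprSr mulmxA.
Qed.

Lemma exists_stable_krylov U T : stablemx U A -> exists2 e, (0 < e)%N &
  stablemx (krylov U T e) A /\ (\rank (krylov U T 1) + e <= \rank (krylov U T e) + 1)%N.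
Proof.
move=> sUA.
suff /(_ N.+1) [//|grows] : forall k, (exists2 e, (0 < e)%N &
    stablemx (krylov U T e) A /\
    (\rank (krylov U T 1) + e <= \rank (krylov U T e) + 1)%N) \/
    (\rank (krylov U T 1) + k <= \rank (krylov U T k.+1))%N.
  by have := rank_leq_col (krylov U T N.+2); lia.
elim=> [|k [//|IHk]]; [by right; rewrite addn0 | by left |].
have [stable|/negP unstable] := boolP (krylov U T k.+2 <= krylov U T k.+1)%MS.
  left; exists k.+1 => //; split; last by lia.
  exact: submx_trans (krylov_mulmx _ _ sUA) stable.
right; suff : (\rank (krylov U T k.+1) < \rank (krylov U T k.+2))%N by lia.
by apply: rank_ltmx; rewrite ltmxE krylovS; apply/negP.
Qed.

Lemma row_full_krylov_cat U T e sg K :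
  stablemx (krylov U T e) A -> row_full (krylov U T e + A)%MS ->
  row_full (krylov U T e + reach sg K)%MS ->
  row_full (U + reach (sched_cat (fun=> T) e sg) (e + K))%MS.
Proof.
move=> sXA fXA fXW; apply: row_fullS (row_full_adds_mulmx_exp e sXA fXA fXW).
by rewrite /krylov -addsmxA addsmxS ?reach_cat.
Qed.

End Reachable.

Section ControllableSchedule.
Variables (F : fieldType) (L N : nat) (A : 'M[F]_N) (G : 'M[F]_(L, N)).
Hypothesis ctrl : forall X : 'M[F]_N, stablemx X A -> (G <= X)%MS -> row_full X.

Lemma exists_unit_schedule (U : 'M[F]_N) : stablemx U A -> row_full (U + A)%MS ->
  exists (sg : nat -> {set 'I_L}) (K : nat), [/\ (K + \rank U <= N)%N,
    forall e, (#|sg e| <= 1)%N & row_full (U + reach A G sg K)%MS].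
Proof.
have [m] := ubnP (N - \rank U); elim: m U => // m IHm U ltUm sUA fUA.
have [fU | nfU] := boolP (row_full U).
  exists (fun=> set0), 0%N; split=> [|e|]; rewrite ?rank_leq_col ?cards0 //.
  exact: row_fullS (addsmxSl _ _) fU.
have /row_subPn[j nGjU] : ~~ (G <= U)%MS by apply: contra nfU; apply: ctrl.
have [e e_gt0 [sXA rankX]] := exists_stable_krylov G [set j] sUA.
have ltUX1 : (\rank U < \rank (krylov A G U [set j] 1))%N.
  apply: rank_ltmx; rewrite ltmxE addsmxSl /=; apply: contra nGjU => sX1U.
  apply: submx_trans sX1U; apply: submx_trans (addsmxSr _ _).
  apply: submx_trans (span_rows_sub_reach _ _ _ (ltnSn 0)) => //.
  by rewrite row_sub_span_rows ?set11.
set X := krylov A G U [set j] e.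
have fXA : row_full (X + A)%MS by apply: row_fullS fUA; rewrite addsmxS ?addsmxSl.
have [|sg [K [rankK sg1 fXK]]] := IHm X _ sXA fXA.
  by rewrite /X; have := rank_leq_col U; move: ltUm ltUX1 rankX nfU; rewrite /row_full; lia.
exists (sched_cat (fun=> [set j]) e sg), (e + K)%N; split.
- by move: rankK ltUX1 rankX; rewrite /X; lia.
- by move=> i; rewrite /sched_cat; case: ifP; rewrite ?cards1.
- exact: row_full_krylov_cat.
Qed.

Lemma exists_full_schedule (T0 : {set 'I_L}) : row_full (span_rows G T0 + A)%MS ->
  exists (sg : nat -> {set 'I_L}) (K : nat),
    [/\ (K + \rank (span_rows G T0) <= N.+1)%N,
         forall e, sg e = T0 \/ (#|sg e| <= 1)%N & row_full (reach A G sg K)].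
Proof.
move=> fT0A.
have s0A : stablemx (0 : 'M[F]_N) A by rewrite mul0mx sub0mx.
have [e e_gt0 [sXA rankX]] := exists_stable_krylov G T0 s0A.
have T0X1 : (span_rows G T0 <= krylov A G 0 T0 1)%MS.
  exact: submx_trans (span_rows_sub_reach _ _ _ _) (addsmxSr _ _).
have T0X : (span_rows G T0 <= krylov A G 0 T0 e)%MS.
  exact: submx_trans (span_rows_sub_reach _ _ _ e_gt0) (addsmxSr _ _).
set X := krylov A G 0 T0 e.
have fXA : row_full (X + A)%MS by apply: row_fullS fT0A; rewrite addsmxS.
have [sg [K [rankK sg1 fXK]]] := exists_unit_schedule sXA fXA.
exists (sched_cat (fun=> T0) e sg), (e + K)%N; split.
- by have := mxrankS T0X1; move: rankK rankX; rewrite /X; lia.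
- by move=> i; rewrite /sched_cat; case: ifP; [left | right].
- by apply: row_fullS (row_full_krylov_cat sXA fXA fXK); rewrite adds0mx.
Qed.

End ControllableSchedule.

Lemma trmxX (R : comPzRingType) n (A : 'M[R]_n) k : (A ^+ k)^T = A^T ^+ k.
Proof.
elim: k => [|k IHk]; first by rewrite !expr0 trmx1.
by rewrite exprS exprSr -[A * _]/(A *m _) trmx_mul IHk.
Qed.

Lemma horner_mx_coef (R : comNzRingType) n (A : 'M[R]_n.+1) (p : {poly R}) :
  horner_mx A p = \sum_(i < size p) p`_i *: A ^+ i.
Proof.
rewrite -{1}[p]coefK poly_def rmorph_sum; apply: eq_bigr => i _ /=.
by rewrite horner_mxZ rmorphXn /= horner_mx_X.
Qed.

Lemma horner_mx_tr (R : comNzRingType) n (A : 'M[R]_n.+1) (p : {poly R}) :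
  horner_mx A^T p = (horner_mx A p)^T.
Proof.
rewrite !horner_mx_coef linear_sum; apply: eq_bigr => i _.
by rewrite linearZ /= trmxX.
Qed.

Lemma mulmx_exp_sub_lower (F : fieldType) n (A : 'M[F]_n.+1) (p : {poly F}) q
    (X : 'M[F]_n.+1) :
  p \is monic -> size p = q.+1 -> horner_mx A p = 0 ->
  (X *m A ^+ q <= \sum_(j < q) X *m A ^+ j)%MS.
Proof.
move=> /monicP lead_p size_p; rewrite horner_mx_coef size_p big_ord_recr /=.
move: lead_p; rewrite /lead_coef size_p => ->; rewrite scale1r.
move/(canRL (addKr _)); rewrite addr0 => ->.
rewrite mulmxN mulmx_sumr -sumrN; apply: summx_sub => i _.
by rewrite -scalemxAr -scaleNr scalemx_sub // (sumsmx_sup i).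
Qed.

Section MinpolySchedule.
Variables (F : fieldType) (L N : nat) (A : 'M[F]_N) (G : 'M[F]_(L, N)) (q : nat).
Hypothesis q_gt0 : (0 < q)%N.
Hypothesis expq_sub : forall X : 'M[F]_N, (X *m A ^+ q <= \sum_(j < q) X *m A ^+ j)%MS.

Definition cyclic_span (T : {set 'I_L}) : 'M[F]_N := reach A G (fun=> T) q.

Lemma cyclic_span_stable T : stablemx (cyclic_span T) A.
Proof.
rewrite /cyclic_span /reach sumsmxMr; apply/sumsmx_subP => j _.
rewrite -mulmxA -[A ^+ j *m A]/(A ^+ j * A) -exprSr.
have [jq|qj] := ltnP j.+1 q; first exact: reach_term.
have -> : j.+1 = q by apply/eqP; rewrite eqn_leq qj ltn_ord.
apply: submx_trans (expq_sub _) _; apply/sumsmx_subP => k _.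
exact: reach_term.
Qed.

Lemma span_rows_sub_cyclic_span T : (span_rows G T <= cyclic_span T)%MS.
Proof. exact: span_rows_sub_reach. Qed.

Lemma row_full_block_schedule (S B0 : {set 'I_L}) (blk : nat -> {set 'I_L}) m :
  (forall X : 'M[F]_N, stablemx X A -> (span_rows G S <= X)%MS -> row_full X) ->
  row_full (span_rows G B0 + A)%MS -> B0 \subset blk 0%N ->
  (forall x, x \in S -> exists2 i, (i < m)%N & x \in blk i) ->
  row_full (reach A G (fun e => blk (e %/ q)%N) (q * m)).
Proof.
move=> ctrlS fB0A B0blk Scov; set W := reach _ _ _ _.
have cycW i : (i < m)%N -> (cyclic_span (blk i) *m A ^+ (i * q) <= W)%MS.
  move=> im; rewrite /cyclic_span /reach sumsmxMr; apply/sumsmx_subP => j _.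
  have lt_iqj : (i * q + j < q * m)%N.
    apply: leq_trans (_ : i * q + q <= q * m)%N; first by rewrite ltn_add2l.
    by rewrite -mulSnr mulnC leq_mul2l im orbT.
  have := reach_term A G (fun e => blk (e %/ q)%N) lt_iqj.
  by rewrite /= divnMDl // divn_small // addn0 addnC exprD mulmxA.
set Z := (\sum_(i < m) cyclic_span (blk i))%MS.
have fZ : row_full Z.
  apply: ctrlS; first by apply: stablemx_sums => i; apply: cyclic_span_stable.
  apply/span_rows_subP => x /Scov[i im xi].
  apply: submx_trans (row_sub_span_rows G xi) _.
  apply: submx_trans (span_rows_sub_cyclic_span _) _.
  exact: (sumsmx_sup (Ordinal im)).
have [m0|m_gt0] := posnP m.
  by apply: row_fullS fZ; rewrite /Z m0 big_ord0 sub0mx.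
have fK0A : row_full (cyclic_span (blk 0) + A)%MS.
  apply: row_fullS fB0A; rewrite addsmxS //.
  exact: submx_trans (span_rowsS _ B0blk) (span_rows_sub_cyclic_span _).
have fK0Z : row_full (cyclic_span (blk 0) + Z)%MS by apply: row_fullS fZ; apply: addsmxSr.
apply: row_fullS (row_full_adds_mulmx_exp (m.-1 * q) (cyclic_span_stable _) fK0A fK0Z).
rewrite addsmx_sub; apply/andP; split.
  by have := cycW 0%N m_gt0; rewrite mul0n expr0 mulmx1.
rewrite /Z sumsmxMr; apply/sumsmx_subP => i _; apply: submx_trans (cycW i (ltn_ord i)).
have -> : (m.-1 * q = (m.-1 - i) * q + i * q)%N.
  by rewrite -mulnDl subnK //; move: (ltn_ord i) m_gt0; lia.
by rewrite exprD mulmxA submxMr // stablemx_exp // cyclic_span_stable.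
Qed.

End MinpolySchedule.

Lemma exists_block_cover (T : finType) (s m : nat) (S B0 : {set T}) :
  (0 < s)%N -> B0 \subset S -> (#|B0| <= s)%N -> (#|S| <= m * s)%N ->
  exists blk : nat -> {set T}, [/\ forall i, (#|blk i| <= s)%N,
     forall x, x \in S -> exists2 i, (i < m)%N & x \in blk i
   & B0 \subset blk 0%N].
Proof.
move=> s_gt0 B0S B0s Sms.
pose l := enum B0 ++ enum (S :\: B0).
have mem_l x : x \in S -> x \in l.
  by move=> xS; rewrite mem_cat !mem_enum in_setD xS andbT; case: (x \in B0).
have size_l : size l = #|S|.
  by rewrite size_cat -!cardE -(cardsID B0 S) (setIidPr B0S).
exists (fun i => [set x in S | index x l %/ s == i]%N); split.
- move=> i; set B := [set x in S | _].
  have inj_mod : {in B &, injective (fun x => (inord (index x l %% s.-1.+1) : 'I_s.-1.+1))}.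
    move=> x y /[!inE] /andP[xS /eqP xi] /andP[yS /eqP yi] /(congr1 val).
    rewrite /= !inordK ?prednK ?ltn_mod // => eq_mod.
    have : index x l = index y l.
      by rewrite (divn_eq (index x l) s) (divn_eq (index y l) s) xi yi eq_mod.
    by move=> /(congr1 (nth x l)); rewrite !nth_index ?mem_l.
  by rewrite -(card_in_imset inj_mod) (leq_trans (max_card _)) ?card_ord ?prednK.
- move=> x xS; exists (index x l %/ s)%N; last by rewrite inE xS eqxx.
  by rewrite ltn_divLR // (leq_trans _ Sms) // -size_l index_mem mem_l.
- apply/subsetP => x xB; rewrite inE (subsetP B0S x xB) /= divn_small //.
  rewrite /l index_cat mem_enum xB.
  by apply: leq_trans B0s; rewrite cardE index_mem mem_enum.
Qed.

Lemma exists_nonroot (R : numDomainType) (p : {poly R}) :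
  p != 0 -> exists t : R, ~~ root p t.
Proof.
move=> p_neq0; have nat_uniq : uniq [seq (k%:R : R) | k <- iota 0 (size p)].
  by rewrite map_inj_uniq ?iota_uniq // => a b /eqP; rewrite eqr_nat => /eqP.
have := contraNN (fun all_roots => max_poly_roots p_neq0 all_roots nat_uniq).
rewrite size_map size_iota ltnn => /(_ isT) /allPn[t _ nroot_t].
by exists t.
Qed.

(* Over an infinite field a vector space is not a finite union of proper
   subspaces: the moment curve t |-> (t ^+ k)_k meets each proper subspace in
   finitely many points, namely roots of a nonzero polynomial. *)
Lemma row_full_of_finite_cover (R : numFieldType) (I : finType) n (M : I -> 'M[R]_n) :
  (forall y : 'rV[R]_n, exists i, (y <= M i)%MS) -> exists i, row_full (M i).
Proof.
case: n M => [|n] M cover.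
  by have [i _] := cover 0; exists i; rewrite /row_full eqn_leq rank_leq_col.
have [/existsP // | /existsPn nfull] := boolP [exists i, row_full (M i)]; exfalso.
have nz i : exists ab : 'I_n.+1 * 'I_n.+1, cokermx (M i) ab.1 ab.2 != 0.
  have /matrix0Pn[a [b nz_ab]] : cokermx (M i) != 0 by rewrite cokermx_eq0.
  by exists (a, b).
have [ab nz_ab] := fin_all_exists nz.
pose p i := \poly_(k < n.+1) cokermx (M i) (inord k) (ab i).2.
have p_neq0 i : p i != 0.
  apply/eqP => /(congr1 (fun r : {poly R} => r`_(ab i).1)).
  by rewrite coef_poly ltn_ord inord_val coef0 => /eqP; apply/negP: (nz_ab i).
have prod_neq0 : \prod_i p i != 0 by apply/prodf_neq0 => i _; apply: p_neq0.
have [t] := exists_nonroot prod_neq0.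
have [c] := cover (\row_k (t ^+ k)).
rewrite submxE => /eqP/matrixP/(_ 0 (ab c).2); rewrite !mxE => yc.
rewrite /root horner_prod (bigD1 c) //= mulf_eq0 negb_or => /andP[/negP[]].
apply/eqP; rewrite horner_poly -[X in _ = X]yc; apply: eq_bigr => k _.
by rewrite !mxE inord_val mulrC.
Qed.

Section RowSelection.
Variables (F : fieldType) (L N : nat) (G : 'M[F]_(L, N)).

Lemma indep_rows_mxrank (U : 'M[F]_N) (T : {set 'I_L}) :
  (forall i, i \in T -> ~~ (row i G <= span_rows G (T :\ i) + U)%MS) ->
  (\rank U + #|T| <= \rank (span_rows G T + U))%N.
Proof.
have [n] := ubnP #|T|; elim: n T => // n IHn T ltTn indepT.
have [T0 | [i iT]] := set_0Vmem T.
  by rewrite T0 cards0 addn0 mxrankS ?addsmxSr.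
have indepTi k : k \in T :\ i -> ~~ (row k G <= span_rows G (T :\ i :\ k) + U)%MS.
  case/setD1P => ki kT; apply: contra (indepT k kT) => /submx_trans; apply.
  apply: addsmxS => //; apply: span_rowsS.
  by apply/subsetP => x; rewrite !inE => /andP[-> /andP[_ ->]].
have := IHn (T :\ i) _ indepTi; rewrite (cardsD1 i T) iT in ltTn *.
move=> /(_ ltTn); suff : (\rank (span_rows G (T :\ i) + U) < \rank (span_rows G T + U))%N.
  by rewrite add1n; lia.
apply: rank_ltmx; rewrite ltmxE addsmxS ?span_rowsS ?subsetDl //=.
apply: contra (indepT i iT) => /(submx_trans _); apply.
exact: submx_trans (row_sub_span_rows G iT) (addsmxSl _ _).
Qed.

Lemma exists_small_spanning_subset (S : {set 'I_L}) (U : 'M[F]_N) :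
  row_full (span_rows G S + U)%MS -> exists2 B : {set 'I_L}, B \subset S &
    (#|B| + \rank U <= N)%N /\ row_full (span_rows G B + U)%MS.
Proof.
move=> fSU; case: (@arg_minnP _ S
  (fun B => (B \subset S) && row_full (span_rows G B + U)%MS) (fun B => #|B|)).
  by rewrite subxx.
move=> B /andP[BS fBU] minB; exists B => //; split => //.
suff indepB : forall i, i \in B -> ~~ (row i G <= span_rows G (B :\ i) + U)%MS.
  by have := indep_rows_mxrank indepB; move: fBU; rewrite /row_full => /eqP->; lia.
move=> i iB; apply/negP => Gi_sub.
have /minB : (B :\ i \subset S) && row_full (span_rows G (B :\ i) + U)%MS.
  rewrite (subset_trans (subsetDl _ _) BS); apply: row_fullS fBU.
  rewrite addsmx_sub addsmxSr andbT; apply/span_rows_subP => k kB.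
  have [-> // | ki] := eqVneq k i.
  by apply: submx_trans (addsmxSl _ _); apply: row_sub_span_rows; rewrite !inE ki.
by rewrite (cardsD1 i B) iB; lia.
Qed.

Lemma exists_basis_subset (T : {set 'I_L}) : exists2 B : {set 'I_L}, B \subset T &
  (span_rows G T <= span_rows G B)%MS /\ \rank (span_rows G B) = #|B|.
Proof.
case: (@arg_minnP _ T
  (fun B => (B \subset T) && (span_rows G T <= span_rows G B)%MS) (fun B => #|B|)).
  by rewrite subxx submx_refl.
move=> B /andP[BT TB] minB; exists B => //; split => //.
apply/eqP; rewrite eqn_leq mxrank_span_rows_card /=.
suff indepB : forall i, i \in B -> ~~ (row i G <= span_rows G (B :\ i) + (0 : 'M_N))%MS.
  by have := indep_rows_mxrank indepB; rewrite mxrank0 addsmx0.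
move=> i iB; rewrite addsmx0; apply/negP => Gi_sub.
have /minB : (B :\ i \subset T) && (span_rows G T <= span_rows G (B :\ i))%MS.
  rewrite (subset_trans (subsetDl _ _) BT); apply: submx_trans TB _.
  apply/span_rows_subP => k kB; have [-> // | ki] := eqVneq k i.
  by apply: row_sub_span_rows; rewrite !inE ki.
by rewrite (cardsD1 i B) iB; lia.
Qed.

Lemma exists_rank_extension (T1 : {set 'I_L}) s : (#|T1| <= s)%N ->
  exists T0 : {set 'I_L}, [/\ (#|T0| <= s)%N, (span_rows G T1 <= span_rows G T0)%MS &
     (minn (\rank G) s <= \rank (span_rows G T0))%N].
Proof.
move=> T1s; have [B1 B1T1 [T1B1 rankB1]] := exists_basis_subset T1.
have B1s : (#|B1| <= s)%N := leq_trans (subset_leq_card B1T1) T1s.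
case: (@arg_maxnP _ B1 (fun T =>
  [&& B1 \subset T, #|T| <= s & \rank (span_rows G T) == #|T|]%N) (fun T => #|T|)).
  by rewrite subxx B1s rankB1 eqxx.
move=> T0 /and3P[B1T0 T0s /eqP rankT0] maxT0; exists T0; split => //.
  exact: submx_trans T1B1 (span_rowsS _ B1T0).
have [ltT0s|] := ltnP #|T0| s; last by rewrite rankT0 geq_min orbC => ->.
have [ltT0G|] := ltnP (\rank (span_rows G T0)) (\rank G); last by rewrite geq_min => ->.
have /row_subPn[j nGjT0] : ~~ (G <= span_rows G T0)%MS.
  by apply: contraTN ltT0G => /mxrankS; rewrite -leqNgt.
have jT0 : j \notin T0 by apply: contra nGjT0; apply: row_sub_span_rows.
have rank_jT0 : \rank (span_rows G (j |: T0)) = #|j |: T0|.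
  apply/eqP; rewrite eqn_leq mxrank_span_rows_card cardsU1 jT0 add1n -rankT0 /=.
  apply: rank_ltmx; rewrite ltmxE span_rowsS ?subsetUr //=.
  by apply: contra nGjT0 => /(submx_trans _); apply; rewrite row_sub_span_rows ?setU11.
suff : (#|j |: T0| <= #|T0|)%N by rewrite cardsU1 jT0 add1n ltnn.
apply: maxT0; rewrite (subset_trans B1T0 (subsetUr _ _)) rank_jT0 eqxx andbT.
by rewrite cardsU1 jT0 add1n.
Qed.

End RowSelection.

Section SparseSystem.
Variables (R : realType) (n L : nat) (D : 'M[R]_n.+1) (H : 'M[R]_(n.+1, L)) (s : nat).
Local Notation N := n.+1.
Local Notation A := D^T.
Local Notation G := H^T.
Local Notation sparse_set := {T : {set 'I_L} | (#|T| <= s)%N}.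

Definition supp (h : 'cV[R]_L) : {set 'I_L} := [set j | h j 0 != 0].

Lemma mulmx_sub_span_supp (h : 'cV[R]_L) : (h^T *m G <= span_rows G (supp h))%MS.
Proof. by apply: mulmx_sub_span_rows => j; rewrite inE negbK mxE => /eqP. Qed.

Lemma state_trS x0 hs k :
  (state D H x0 hs k.+1)^T = (state D H x0 hs k)^T *m A + (hs k)^T *m G.
Proof. by rewrite /= linearD /= !trmx_mul. Qed.

Lemma state_tr x0 hs k : (state D H x0 hs k)^T =
  x0^T *m A ^+ k + \sum_(i < k) (hs i)^T *m G *m A ^+ (k - i.+1).
Proof.
elim: k => [|k IHk]; first by rewrite big_ord0 addr0 expr0 mulmx1.
rewrite state_trS IHk mulmxDl big_ord_recr /= subnn expr0 mulmx1 addrA mulmx_suml.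
congr (_ + _ + _); first by rewrite -mulmxA -[A ^+ k *m A]/(A ^+ k * A) -exprSr.
apply: eq_bigr => i _; rewrite -mulmxA -[A ^+ _ *m A]/(A ^+ (k - i.+1) * A) -exprSr.
by rewrite subSn.
Qed.

Lemma state0_tr_sub hs k :
  ((state D H 0 hs k)^T <= \sum_(i < k) span_rows G (supp (hs i)) *m A ^+ (k - i.+1))%MS.
Proof.
rewrite state_tr trmx0 mul0mx add0r; apply: summx_sub => i _.
exact: submx_trans (submxMr _ (mulmx_sub_span_supp _)) (sumsmx_sup i _ _).
Qed.

Lemma sparse_controllable_stable_full : sparse_controllable D H s ->
  forall X : 'M[R]_N, stablemx X A -> (G <= X)%MS -> row_full X.
Proof.
move=> ctrl X sXA GX; rewrite -sub1mx; apply/row_subP => i; rewrite -[row i _]trmxK.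
have [K [hs [_ <-]]] := ctrl 0 (row i 1%:M)^T.
rewrite state_tr trmx0 mul0mx add0r; apply: summx_sub => j _.
by apply: submx_trans (stablemx_exp _ sXA); apply: submxMr; apply: mulmx_sub.
Qed.

Lemma exists_sparse_complement : sparse_controllable D H s ->
  exists T1 : {set 'I_L}, (#|T1| <= s)%N /\ row_full (span_rows G T1 + A)%MS.
Proof.
move=> ctrl; pose M (T : sparse_set) := (span_rows G (val T) + A)%MS.
suff [[T1 T1s] fT1] : exists T, row_full (M T) by exists T1.
apply: row_full_of_finite_cover => y; rewrite -[y]trmxK.
have [[|K] [hs [hs_s <-]]] := ctrl 0 y^T.
  have set0_s : (#|set0 : {set 'I_L}| <= s)%N by rewrite cards0.
  by exists (exist _ set0 set0_s); rewrite trmx0 sub0mx.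
exists (exist _ (supp (hs K)) (hs_s K (ltnSn K))); rewrite /M /= state_trS addsmxC.
by rewrite addmx_sub_adds ?submxMl ?mulmx_sub_span_supp.
Qed.

Lemma steerable_in_of_schedule (sg : nat -> {set 'I_L}) K :
  (forall e, (e < K)%N -> (#|sg e| <= s)%N) -> row_full (reach A G sg K) ->
  steerable_in D H s K.
Proof.
case: K => [|K] sg_s fW x0 xf.
  by move: fW; rewrite /row_full /reach big_ord0 mxrank0.
have /sub_sumsmxP[u target] : ((xf - D ^+ K.+1 *m x0)^T <= reach A G sg K.+1)%MS.
  exact: submx_full.
have coef (e : 'I_K.+1) : exists2 v : 'rV[R]_L, (forall j, j \notin sg e -> v 0 j = 0) &
    u e *m (span_rows G (sg e) *m A ^+ e) = v *m G *m A ^+ e.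
  have [v vsg uv] := sub_span_rowsP (submxMl (u e) (span_rows G (sg e))).
  by exists v; rewrite // mulmxA uv.
have [v vsg uv] := fin_all_exists2 coef.
pose hs i := if (i < K.+1)%N then (v (inord (K - i)))^T else 0.
exists hs; split.
  move=> i iK; rewrite /l0norm /hs iK; set e : 'I_K.+1 := inord (K - i).
  apply: leq_trans (sg_s e (ltn_ord e)); apply: subset_leq_card.
  by apply/subsetP => j; rewrite !inE mxE; apply: contraR => /vsg->; rewrite eqxx.
apply: trmx_inj; rewrite state_tr.
suff -> : \sum_(i < K.+1) (hs i)^T *m G *m A ^+ (K.+1 - i.+1) = (xf - D ^+ K.+1 *m x0)^T.
  by rewrite linearB /= trmx_mul trmxX addrC subrK.
rewrite target (reindex_inj rev_ord_inj) /=; apply: eq_bigr => j _.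
have Kj : (K - j < K.+1)%N by rewrite ltnS leq_subr.
have KKj : (K - (K - j) = j)%N by rewrite subKn // -ltnS.
by rewrite uv /hs !subSS Kj trmxK KKj inord_val.
Qed.

Lemma steerable_in_mxrank K : steerable_in D H s K -> (N <= K * minn (\rank H) s)%N.
Proof.
move=> steer.
pose M (sg : {ffun 'I_K -> sparse_set}) :=
  (\sum_(i < K) span_rows G (val (sg i)) *m A ^+ (K - i.+1))%MS.
have [sg fM] : exists sg, row_full (M sg).
  apply: row_full_of_finite_cover => y; rewrite -[y]trmxK.
  have [hs [hs_s <-]] := steer 0 y^T.
  exists [ffun i : 'I_K => exist _ (supp (hs i)) (hs_s i (ltn_ord i))].
  apply: submx_trans (state0_tr_sub _ _) _; apply/sumsmx_subP => i _.
  by rewrite (sumsmx_sup i) // ffunE.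
apply: leq_trans (_ : \rank (M sg) <= _)%N; first by move: fM; rewrite /row_full => /eqP->.
apply: leq_trans (mxrank_sum_leqif _).1 _.
rewrite -[X in (_ <= X * _)%N]card_ord -sum_nat_const; apply: leq_sum => i _.
apply: leq_trans (mxrankM_maxl _ _) _; rewrite leq_min -(mxrank_tr H) mxrank_span_rows.
exact: leq_trans (mxrank_span_rows_card _ _) (valP (sg i)).
Qed.

End SparseSystem.

Lemma exists_eigenvector_sub (C : closedFieldType) n (Z M : 'M[C]_n) :
  Z != 0 -> stablemx Z M ->
  exists lam, exists2 w : 'rV[C]_n, w != 0 & (w <= Z)%MS /\ w *m M = lam *: w.
Proof.
move=> Z_neq0 sZM; set B := row_base Z.
have /submxP[M' BM] : (B *m M <= B)%MS.
  by rewrite eq_row_base (submx_trans _ sZM) ?submxMr ?eq_row_base.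
have : size (char_poly M') != 1%N.
  by rewrite size_char_poly eqSS; apply: contra Z_neq0 => /eqP rZ; rewrite -mxrank_eq0 rZ.
case/closed_rootP => lam; rewrite -eigenvalue_root_char => /eigenvalueP[v vM' v_neq0].
exists lam, (v *m B); first by rewrite mulmx_free_eq0 ?row_base_free.
split; first by apply: submx_trans (submxMl v B) _; rewrite eq_row_base.
by rewrite -mulmxA BM mulmxA vM' scalemxAl.
Qed.

Section PBH.
Variables (R : realType) (n L : nat) (D : 'M[R]_n.+1) (H : 'M[R]_(n.+1, L)) (s : nat).
Local Notation N := n.+1.
Local Notation A := D^T.
Local Notation G := H^T.
Local Notation toC := (map_mx (real_complex R)).

Lemma colsub_set_tr_sub (S : {set 'I_L}) : ((colsub_set H S)^T <= span_rows G S)%MS.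
Proof.
suff -> : (colsub_set H S)^T = rowsub (fun j : 'I_#|S| => enum_val j) G.
  by rewrite span_rows_rowsub.
by apply/matrixP => i j; rewrite !mxE.
Qed.

Lemma PBH_full_row_full (S : {set 'I_L}) :
  PBH_full D H S -> row_full (span_rows G S + A)%MS.
Proof.
move=> pbh; have := pbh 0; rewrite raddf0 subr0 -map_row_mx mxrank_map.
rewrite -mxrank_tr tr_row_mx -addsmxE => /eqP fAS.
by apply: row_fullS fAS; rewrite addsmxC addsmxS ?colsub_set_tr_sub.
Qed.

(* A proper D^T-stable subspace X containing the columns of H_S has a nonzero
   annihilator Z, which is D-stable and kills H_S; a complex left eigenvector
   of D inside Z violates the rank condition at its eigenvalue. *)
Lemma PBH_full_stable_full (S : {set 'I_L}) : PBH_full D H S ->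
  forall X : 'M[R]_N, stablemx X A -> (span_rows G S <= X)%MS -> row_full X.
Proof.
move=> pbh X sXA SX; apply/negPn/negP => nfX.
set Z := kermx X^T.
have Z_neq0 : Z != 0.
  by rewrite -mxrank_eq0 mxrank_ker mxrank_tr subn_eq0 -ltnNge ltn_neqAle rank_leq_col andbT.
have sZD : stablemx Z D.
  apply/sub_kermxP; case/submxP: sXA => M XA.
  by rewrite -mulmxA -[D]trmxK -trmx_mul XA trmx_mul mulmxA mulmx_ker mul0mx.
have ZHS : Z *m colsub_set H S = 0.
  have /submxP[Y HSX] := submx_trans (colsub_set_tr_sub S) SX.
  by rewrite -[colsub_set H S]trmxK HSX trmx_mul mulmxA mulmx_ker mul0mx.
have sZDC : stablemx (toC Z) (toC D) by rewrite -map_mxM map_submx.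
have toCZ_neq0 : toC Z != 0 by rewrite map_mx_eq0.
have [lam [w w_neq0 [wZ wD]]] := exists_eigenvector_sub toCZ_neq0 sZDC.
have wHS : w *m toC (colsub_set H S) = 0.
  by case/submxP: wZ => u ->; rewrite -mulmxA -map_mxM ZHS map_mx0 mulmx0.
have : (w <= kermx (row_mx (toC D - lam%:M) (toC (colsub_set H S))))%MS.
  by apply/sub_kermxP; rewrite mul_mx_row mulmxBr wD wHS mul_mx_scalar subrr row_mx0.
move/mxrankS; rewrite mxrank_ker pbh subnn leqn0 mxrank_eq0.
by apply/negP.
Qed.

Lemma sparse_controllable_PBH_full : sparse_controllable D H s -> PBH_full D H setT.
Proof.
move=> ctrl lam; set M := row_mx _ _.
apply/eqP; rewrite eqn_leq rank_leq_row /= leqNgt; apply/negP => rankM.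
have /matrix0Pn[i [j kerM_ij]] : kermx M != 0.
  by rewrite -mxrank_eq0 mxrank_ker subn_eq0 -ltnNge.
set w := row i (kermx M).
have /eqP : w *m M = 0 by rewrite -row_mul mulmx_ker row0.
rewrite mul_mx_row row_mx_eq0 => /andP[/eqP wD /eqP wHS].
have {}wD : w *m toC D = lam *: w.
  by move/eqP: wD; rewrite mulmxBr mul_mx_scalar subr_eq0 => /eqP.
have wH : w *m toC H = 0.
  apply/matrixP => a b; have bT : b \in [set: 'I_L] by rewrite inE.
  move/matrixP: wHS => /(_ a (enum_rank_in bT b)); rewrite !mxE => wHS_ab.
  rewrite -[RHS]wHS_ab.
  by apply: eq_bigr => k _; rewrite /colsub_set !mxE (enum_rankK_in bT bT).
have w_state hs k : w *m toC (state D H 0 hs k) = 0.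
  elim: k => [|k IHk] /=; first by rewrite map_mx0 mulmx0.
  rewrite map_mxD !map_mxM mulmxDr !mulmxA wD wH mul0mx addr0.
  by rewrite -scalemxAl IHk scaler0.
have [K [hs [_ hs_xf]]] := ctrl 0 (delta_mx j 0).
move: kerM_ij; have := w_state hs K; rewrite hs_xf map_delta_mx -colE.
by move/matrixP/(_ 0 0); rewrite !mxE => ->; rewrite eqxx.
Qed.

End PBH.

Lemma ex_minimal (P : nat -> Prop) :
  (exists n, P n) -> exists2 m, P m & forall k, P k -> (m <= k)%N.
Proof.
move=> [n Pn]; apply: NNPP => nomin; move: Pn; elim/ltn_ind: n => k IHk Pk.
by apply: nomin; exists k => // j Pj; rewrite leqNgt; apply/negP => /IHk.
Qed.

Lemma ceil_ratio_nat (R : archiRealFieldType) (a s : nat) : (0 < s)%N ->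
  exists2 m : nat, (Num.ceil (a%:R / s%:R : R))%:~R = m%:R :> R & (a <= m * s)%N.
Proof.
move=> s_gt0; set c := Num.ceil _.
have c_ge0 : 0 <= c by rewrite ceil_ge0 (lt_le_trans (ltrN10 R)) ?divr_ge0.
exists `|c|%N; first by rewrite natr_absz ger0_norm.
rewrite -(ler_nat R) natrM natr_absz ger0_norm // -ler_pdivrMr ?ltr0n //.
exact: ceil_ge.
Qed.

Section UpperBounds.
Variables (R : realType) (n L : nat) (D : 'M[R]_n.+1) (H : 'M[R]_(n.+1, L)) (s : nat).
Hypotheses (s_gt0 : (0 < s)%N) (ctrl : sparse_controllable D H s).
Local Notation N := n.+1.

Lemma steerable_in_rank_bound :
  exists2 K, (K <= N - minn (\rank H) s + 1)%N & steerable_in D H s K.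
Proof.
have [T1 [T1s fT1A]] := exists_sparse_complement ctrl.
have [T0 [T0s T1T0 rankT0]] := exists_rank_extension H^T T1s.
have fT0A : row_full (span_rows H^T T0 + D^T)%MS.
  by apply: row_fullS fT1A; rewrite addsmxS.
have [sg [K [rankK sg_s fW]]] :=
  exists_full_schedule (sparse_controllable_stable_full ctrl) fT0A.
exists K; first by move: rankK rankT0; rewrite mxrank_tr; lia.
apply: steerable_in_of_schedule fW => e _.
by have [->|sg1] := sg_s e; [exact: T0s | exact: leq_trans sg1 s_gt0].
Qed.

Lemma steerable_in_minpoly_bound (S : {set 'I_L}) m :
  PBH_full D H S -> (#|S| <= m * s)%N -> steerable_in D H s (degree_mxminpoly D * m).
Proof.
move=> pbh Sms.
have [B0 B0S [B0A fB0A]] := exists_small_spanning_subset (PBH_full_row_full pbh).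
have B0s : (#|B0| <= s)%N.
  have [T1 [T1s /eqP fT1A]] := exists_sparse_complement ctrl.
  have := (mxrank_adds_leqif (span_rows H^T T1) D^T).1.
  by have := mxrank_span_rows_card H^T T1; move: fT1A B0A T1s; lia.
have [blk [blk_s Scov B0blk]] := exists_block_cover s_gt0 B0S B0s Sms.
set q := degree_mxminpoly D.
apply: (@steerable_in_of_schedule _ _ _ _ _ _ (fun e => blk (e %/ q)%N)) => [e _|].
  exact: blk_s.
have expq_sub (X : 'M[R]_N) : (X *m D^T ^+ q <= \sum_(j < q) X *m D^T ^+ j)%MS.
  apply: (mulmx_exp_sub_lower X (mxminpoly_monic D) (size_mxminpoly D)).
  by rewrite horner_mx_tr mx_root_minpoly trmx0.
exact: (row_full_block_schedule (mxminpoly_nonconstant D) expq_sub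
  (PBH_full_stable_full pbh) fB0A B0blk Scov).
Qed.

End UpperBounds.

Theorem theorem3 (R : realType) (n L s : nat) (D : 'M[R]_n.+1)
  (H : 'M[R]_(n.+1, L)) :
  (0 < s)%N -> (s <= L)%N ->
  sparse_controllable D H s ->
  let N := n.+1 in
  let q := degree_mxminpoly D in
  let Rstar := minn (\rank H) s in
  exists Kstar Sstar : nat,
    (* Kstar is the minimal number of s-sparse inputs *)
    (steerable_in D H s Kstar /\
     forall K, steerable_in D H s K -> (Kstar <= K)%N) /\
    (* Sstar is the minimal size of S with the PBH-type rank condition *)
    ((exists S : {set 'I_L}, #|S| = Sstar /\ PBH_full D H S) /\
     forall S : {set 'I_L}, PBH_full D H S -> (Sstar <= #|S|)%N) /\
    (N%:R / Rstar%:R <= (Kstar%:R : R)) /\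
    ((Kstar%:R : R) <=
       Num.min (q%:R * (Num.ceil (Sstar%:R / s%:R : R))%:~R)
               (N%:R - Rstar%:R + 1)) /\
    (Num.min (q%:R * (Num.ceil (Sstar%:R / s%:R : R))%:~R)
             (N%:R - Rstar%:R + 1) <= (N%:R : R)).
Proof.
move=> s_gt0 _ ctrl N q Rstar.
have [K1 K1_le steer1] := steerable_in_rank_bound s_gt0 ctrl.
have [Kstar steerK minK] := @ex_minimal (steerable_in D H s) (ex_intro _ K1 steer1).
have [Sstar [S [cardS pbhS]] minS] :=
  @ex_minimal (fun m => exists S : {set 'I_L}, #|S| = m /\ PBH_full D H S)
    (ex_intro _ _ (ex_intro _ setT (conj erefl (sparse_controllable_PBH_full ctrl)))).
exists Kstar, Sstar; split; first by [].
split; first by split => [|S' pbhS']; [exists S | apply: minS; exists S'].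
have lowK : (N <= Kstar * Rstar)%N := steerable_in_mxrank steerK.
have Rstar_gt0 : (0 < Rstar)%N by move: lowK; rewrite lt0n; case: eqP => // ->; rewrite muln0.
have Rstar_le : (Rstar <= N)%N by rewrite geq_min rank_leq_row.
have [m ceil_m Sms] := ceil_ratio_nat R Sstar s_gt0; rewrite -cardS in Sms.
have ubK2 := minK _ (steerable_in_minpoly_bound s_gt0 ctrl pbhS Sms).
have ubK1 := leq_trans (minK _ steer1) K1_le.
rewrite ceil_m -natrM -natrB // natr1 ler_pdivrMr ?ltr0n // -natrM ler_nat.
rewrite le_min ge_min !ler_nat ubK2 orbC /=; split=> //.
by move: ubK1 Rstar_gt0 Rstar_le; rewrite /N /Rstar; lia.
Qed.
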